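(* Let $s\ge 1$, $1\le M<N$ be integers and let $\tilde\phi:(0,\infty)\to\mathbb{R}$ be of class $C^4$, such that for some $r^*>0$ one has $\tilde\phi''(r)\ge 0$ for $r\in(0,r^*]$ and $\tilde\phi''(r)<0$ for $r>r^*$, and such that $\tilde\phi$ and its derivatives decay at infinity. Let $(y_\ell)_{\ell\in\mathbb{Z}}$ be an increasing chain with $y_{\ell+1+2N}-y_{\ell+2N}=y_{\ell+1}-y_\ell$ for all $\ell$, with atomistic energy $$\mathcal{E}^a(\mathbf{y})=\sum_{k=1}^{s}\sum_{\ell=-N+1}^{N}\tilde\phi(y_{\ell+k-1}-y_{\ell-1}).$$ Let $-N=\ell_{-M}<\ell_{-M+1}<\dots<\ell_M=N$ be integers, extended by $\ell_{j+2M}=\ell_j+2N$, set $Y_j=y_{\ell_j}$, $\tilde\nu_j=\ell_j-\ell_{j-1}$ and $\tilde r_j=(Y_j-Y_{j-1})/\tilde\nu_j$, and assume $\tilde\nu_j\ge s$ for all $j$ and that $\mathbf y$ is the piecewise linear interpolation of the $Y_j$, i.e. $y_{\ell_{j-1}+i}=Y_{j-1}+i\tilde r_j$ for $0\le i\le \tilde\nu_j$; write $\mathcal{E}^a(\mathbf{Y})$ for $\mathcal{E}^a(\mathbf y)$. Fix $\epsilon>0$ and define $\phi(r)=\epsilon^{-1}\tilde\phi(\epsilon r)$, $\phi_{cb}(r)=\sum_{k=1}^s\phi(kr)$, $X_j=\epsilon\ell_j$, $H_j=(X_j-X_{j-2})/2$, $\nu_j=\epsilon\tilde\nu_j$, $Y'_j=(Y_j-Y_{j-1})/(X_j-X_{j-1})$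 $(=\tilde r_j/\epsilon)$, $Y''_j=(Y'_j-Y'_{j-1})/H_j$, and the local QC energy $\mathcal{E}^{qc}(\mathbf{Y})=\sum_{j=-M+1}^{M}\nu_j\phi_{cb}(Y'_j)$. Then there exist scalars $\eta_{jk}\in[0,1]$ ($j=-M+1,\dots,M$, $k=2,\dots,s$) such that $$\mathcal{E}^a(\mathbf{Y})=\mathcal{E}^{qc}(\mathbf{Y})+\sum_{j=-M+1}^{M}H_{j+1}C_j\left\{\epsilon H_{j+1}(Y''_{j+1})^2\right\},\qquad C_j:=\sum_{k=2}^{s}\frac{-k^3+k}{12}\,\phi''\Big(k\big(\eta_{jk}Y'_j+(1-\eta_{jk})Y'_{j+1}\big)\Big).$$ (In this sense $\mathcal{E}^{qc}$ is formally a second order approximation of $\mathcal{E}^a$.)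
   Context: All indexed quantities $Y_j,\tilde r_j, X_j, H_j, Y'_j, Y''_j$ are extended to all $j\in\mathbb{Z}$ via the periodic extension of the indices $\ell_j$ and the periodicity of the chain (so e.g. $Y'_{M+1}=Y'_{-M+1}$). *)

From Stdlib Require Import Reals ZArith List Lra Lia.
From Coquelicot Require Import Coquelicot.
Open Scope R_scope.

Definition sumZ (a b : Z) (f : Z -> R) : R :=
  fold_right Rplus 0
    (map (fun i : nat => f (a + Z.of_nat i)%Z) (seq 0 (Z.to_nat (b - a + 1)))).

Definition C4_pos (f : R -> R) : Prop :=
  forall r, 0 < r ->
    (forall n, (n <= 4)%nat -> ex_derive_n f n r) /\ continuous (Derive_n f 4) r.

Definition decays_at_infty (f : R -> R) : Prop :=
  forall n, (n <= 4)%nat -> is_lim (Derive_n f n) p_infty 0.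

Definition E_atom (s N : Z) (phit : R -> R) (y : Z -> R) : R :=
  sumZ 1 s (fun k => sumZ (- N + 1) N (fun l => phit (y (l + k - 1)%Z - y (l - 1)%Z))).

Definition phi_eps (eps : R) (phit : R -> R) (r : R) : R := / eps * phit (eps * r).

Definition phi_cb (s : Z) (eps : R) (phit : R -> R) (r : R) : R :=
  sumZ 1 s (fun k => phi_eps eps phit (IZR k * r)).

Definition Xn (eps : R) (ell : Z -> Z) (j : Z) : R := eps * IZR (ell j).
Definition Hn (eps : R) (ell : Z -> Z) (j : Z) : R :=
  (Xn eps ell j - Xn eps ell (j - 2)%Z) / 2.
Definition nun (eps : R) (ell : Z -> Z) (j : Z) : R := eps * IZR (ell j - ell (j - 1))%Z.
Definition Yn (y : Z -> R) (ell : Z -> Z) (j : Z) : R := y (ell j).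
Definition Y1 (eps : R) (y : Z -> R) (ell : Z -> Z) (j : Z) : R :=
  (Yn y ell j - Yn y ell (j - 1)%Z) / (Xn eps ell j - Xn eps ell (j - 1)%Z).
Definition Y2 (eps : R) (y : Z -> R) (ell : Z -> Z) (j : Z) : R :=
  (Y1 eps y ell j - Y1 eps y ell (j - 1)%Z) / Hn eps ell j.

Definition E_qc (s M : Z) (eps : R) (phit : R -> R) (y : Z -> R) (ell : Z -> Z) : R :=
  sumZ (- M + 1) M (fun j => nun eps ell j * phi_cb s eps phit (Y1 eps y ell j)).

(* Since y is affine on each element, every bond of length k either lies inside an
   element or straddles a node.  Element j carries (ν_j - k + 1) bonds of length k r_j,
   while the node between elements j and j+1 carries the k - 1 bonds of lengths
   k r_j + i (r_{j+1} - r_j), 0 < i < k.  Against the QC energy ν_j φ̃(k r_j), the surplus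
   of element j is the error of the trapezoid rule with k panels for
   g(t) = φ̃(k r_j + t k (r_{j+1} - r_j)) on [0, 1], plus a boundary term that telescopes
   over a period.  That error is -(k^2 - 1)/(12 k) g''(η) for some η in [0, 1], proved by
   comparing g with the parabola of constant second derivative through g(0) and g(1) and
   using the intermediate value theorem for g''; rescaling to φ and Y' gives the formula.
   Only the C^2 regularity of φ̃ on (0, ∞) enters. *)

From Stdlib Require Import Reals ZArith List Lra Lia Classical IndefiniteDescription Ranalysis5.
From Coquelicot Require Import Coquelicot.
Open Scope R_scope.

(** * Sums over integer ranges *)

Lemma sumZ_empty a b f : (b < a)%Z -> sumZ a b f = 0.
Proof. intros H. unfold sumZ. now replace (Z.to_nat (b - a + 1)) with 0%nat by lia. Qed.

Lemma sumZ_last a b f : (a <= b)%Z -> sumZ a b f = sumZ a (b - 1) f + f b.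
Proof.
  intros H. unfold sumZ.
  replace (Z.to_nat (b - a + 1)) with (S (Z.to_nat (b - 1 - a + 1))) by lia.
  rewrite seq_S, map_app, fold_right_app; simpl.
  replace (a + Z.of_nat (Z.to_nat (b - 1 - a + 1)))%Z with b by lia.
  generalize (map (fun i : nat => f (a + Z.of_nat i)%Z) (seq 0 (Z.to_nat (b - 1 - a + 1)))).
  intros l; induction l as [|x l IH]; simpl; [ring | rewrite IH; ring].
Qed.

Lemma sumZ_ind a (P : Z -> Prop) :
  (forall b, (b < a)%Z -> P b) -> (forall b, (a <= b)%Z -> P (b - 1)%Z -> P b) ->
  forall b, P b.
Proof.
  intros Hempty Hstep b. destruct (Z_lt_le_dec b a) as [Hb|Hb]; [now apply Hempty|].
  replace b with (a - 1 + Z.of_nat (Z.to_nat (b - a + 1)))%Z by lia.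
  induction (Z.to_nat (b - a + 1)) as [|n IH].
  - apply Hempty; lia.
  - apply Hstep; [lia|].
    now replace (a - 1 + Z.of_nat (S n) - 1)%Z with (a - 1 + Z.of_nat n)%Z by lia.
Qed.

Lemma sumZ_ext a b f g : (forall i, (a <= i <= b)%Z -> f i = g i) -> sumZ a b f = sumZ a b g.
Proof.
  induction b as [b Hb|b Hb IH] using (sumZ_ind a); intros Hfg.
  - now rewrite !sumZ_empty.
  - rewrite !(sumZ_last a b), IH, Hfg by (intros; try apply Hfg; lia). reflexivity.
Qed.

Lemma sumZ_plus a b f g : sumZ a b (fun i => f i + g i) = sumZ a b f + sumZ a b g.
Proof.
  induction b as [b Hb|b Hb IH] using (sumZ_ind a).
  - rewrite !sumZ_empty by lia. ring.
  - rewrite !(sumZ_last a b), IH by lia. ring.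
Qed.

Lemma sumZ_scal_l a b c f : sumZ a b (fun i => c * f i) = c * sumZ a b f.
Proof.
  induction b as [b Hb|b Hb IH] using (sumZ_ind a).
  - rewrite !sumZ_empty by lia. ring.
  - rewrite !(sumZ_last a b), IH by lia. ring.
Qed.

Lemma sumZ_scal_r a b c f : sumZ a b (fun i => f i * c) = sumZ a b f * c.
Proof. rewrite Rmult_comm, <- sumZ_scal_l. apply sumZ_ext; intros; ring. Qed.

Lemma sumZ_minus a b f g : sumZ a b (fun i => f i - g i) = sumZ a b f - sumZ a b g.
Proof.
  replace (sumZ a b f - sumZ a b g) with (sumZ a b f + -1 * sumZ a b g) by ring.
  rewrite <- sumZ_scal_l, <- sumZ_plus. apply sumZ_ext; intros; ring.
Qed.

Lemma sumZ_split a m b f : (a - 1 <= m <= b)%Z -> sumZ a b f = sumZ a m f + sumZ (m + 1) b f.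
Proof.
  induction b as [b Hb|b Hb IH] using (sumZ_ind (m + 1)); intros Hm.
  - replace b with m by lia. rewrite (sumZ_empty (m + 1)) by lia. ring.
  - rewrite (sumZ_last a b), (sumZ_last (m + 1) b), IH by lia. ring.
Qed.

Lemma sumZ_first a b f : (a <= b)%Z -> sumZ a b f = f a + sumZ (a + 1) b f.
Proof.
  intros H. rewrite (sumZ_split a a b), (sumZ_last a a), (sumZ_empty a (a - 1)) by lia. ring.
Qed.

Lemma sumZ_shift a b c f : sumZ a b (fun i => f (i + c)%Z) = sumZ (a + c) (b + c) f.
Proof.
  unfold sumZ. replace (b + c - (a + c) + 1)%Z with (b - a + 1)%Z by lia.
  f_equal. apply map_ext. intros i. f_equal. lia.
Qed.

Lemma sumZ_const a b c : (a - 1 <= b)%Z -> sumZ a b (fun _ => c) = IZR (b - a + 1) * c.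
Proof.
  induction b as [b Hb|b Hb IH] using (sumZ_ind a); intros Hab.
  - rewrite sumZ_empty by lia. replace (b - a + 1)%Z with 0%Z by lia. ring.
  - rewrite sumZ_last, IH by lia.
    replace (b - a + 1)%Z with (b - 1 - a + 1 + 1)%Z by lia.
    rewrite (plus_IZR (b - 1 - a + 1) 1). change (IZR 1) with 1. ring.
Qed.

Lemma sumZ_swap a b c d F :
  sumZ a b (fun j => sumZ c d (fun k => F j k)) = sumZ c d (fun k => sumZ a b (fun j => F j k)).
Proof.
  induction b as [b Hb|b Hb IH] using (sumZ_ind a).
  - rewrite sumZ_empty by lia. rewrite <- (Rmult_0_l (sumZ c d (fun _ => 1))), <- sumZ_scal_l.
    apply sumZ_ext; intros. rewrite sumZ_empty by lia. ring.
  - rewrite sumZ_last, IH, <- sumZ_plus by lia.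
    apply sumZ_ext; intros. now rewrite (sumZ_last a b) by lia.
Qed.

Lemma sumZ_neg a b f : (a <= b)%Z -> (forall i, (a <= i <= b)%Z -> f i < 0) -> sumZ a b f < 0.
Proof.
  induction b as [b Hb|b Hb IH] using (sumZ_ind a); intros Hab Hf; [lia|].
  rewrite sumZ_last by lia.
  assert (Hb' := Hf b ltac:(lia)).
  destruct (Z.eq_dec b a) as [->|Hne].
  - rewrite sumZ_empty by lia. lra.
  - assert (sumZ a (b - 1) f < 0) by (apply IH; intros; try apply Hf; lia). lra.
Qed.

Lemma sumZ_telescope a b Q : (a - 1 <= b)%Z ->
  sumZ a b (fun j => Q (j + 1)%Z - Q j) = Q (b + 1)%Z - Q a.
Proof.
  induction b as [b Hb|b Hb IH] using (sumZ_ind a); intros Hab.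
  - rewrite sumZ_empty by lia. replace (b + 1)%Z with a by lia. ring.
  - rewrite sumZ_last, IH, Z.sub_add by lia. ring.
Qed.

Lemma sumZ_quadratic n A B C : (0 <= n)%Z ->
  sumZ 1 n (fun i => A * IZR i ^ 2 + B * IZR i + C) =
  A * (IZR n * (IZR n + 1) * (2 * IZR n + 1) / 6) + B * (IZR n * (IZR n + 1) / 2) + C * IZR n.
Proof.
  induction n as [n Hn|n Hn IH] using (sumZ_ind 1); intros Hn0.
  - replace n with 0%Z by lia. rewrite sumZ_empty by lia. simpl. field.
  - rewrite sumZ_last, IH, minus_IZR by lia. simpl. field.
Qed.

Lemma Z_incr_le (e : Z -> Z) : (forall j, (e (j - 1) < e j)%Z) ->
  forall a b, (a <= b)%Z -> (e a <= e b)%Z.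
Proof.
  intros He a b. induction b as [b Hb|b Hb IH] using (sumZ_ind a); intros Hab; [lia|].
  destruct (Z.eq_dec b a) as [->|Hne]; [lia|]. specialize (He b). specialize (IH ltac:(lia)). lia.
Qed.

Lemma sumZ_blocks (e : Z -> Z) F a b : (forall j, (e (j - 1) < e j)%Z) -> (a <= b)%Z ->
  sumZ (e a) (e b - 1) F
  = sumZ (a + 1) b (fun j => sumZ 0 (e j - e (j - 1)%Z - 1) (fun i => F (e (j - 1) + i)%Z)).
Proof.
  intros He. induction b as [b Hb|b Hb IH] using (sumZ_ind (a + 1)); intros Hab.
  - replace b with a by lia. rewrite !sumZ_empty by lia. reflexivity.
  - assert (Hle := Z_incr_le e He a (b - 1) ltac:(lia)). specialize (He b).
    rewrite (sumZ_split (e a) (e (b - 1)%Z - 1)), IH, (sumZ_last (a + 1) b) by lia. f_equal.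
    rewrite (sumZ_ext 0 _ _ (fun i => F (i + e (b - 1)%Z)%Z)) by (intros; f_equal; lia).
    rewrite sumZ_shift. f_equal; lia.
Qed.

(** * The trapezoid rule *)

Lemma convex_neg_between_roots (F F1 F2 : R -> R) :
  (forall t, 0 <= t <= 1 -> is_derive F t (F1 t)) ->
  (forall t, 0 <= t <= 1 -> is_derive F1 t (F2 t)) ->
  (forall t, 0 <= t <= 1 -> 0 < F2 t) -> F 0 = 0 -> F 1 = 0 ->
  forall t, 0 < t < 1 -> F t < 0.
Proof.
  intros HF HF1 HF2 F0 F1e t Ht.
  apply Rnot_le_lt; intros Hpos.
  destruct (MVT_cor2 F F1 0 t) as [a [Ha Ha']];
    [lra | intros; apply is_derive_Reals, HF; lra |].
  destruct (MVT_cor2 F F1 t 1) as [b [Hb Hb']];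
    [lra | intros; apply is_derive_Reals, HF; lra |].
  destruct (MVT_cor2 F1 F2 a b) as [c [Hc Hc']];
    [lra | intros; apply is_derive_Reals, HF1; lra |].
  assert (0 <= F1 a) by nra.
  assert (F1 b <= 0) by nra.
  specialize (HF2 c ltac:(lra)). nra.
Qed.

Lemma ivt_closed (g : R -> R) a b v : a <= b ->
  (forall x, a <= x <= b -> continuity_pt g x) -> (g a - v) * (g b - v) <= 0 ->
  exists z, a <= z <= b /\ g z = v.
Proof.
  intros Hab Hc Hsign.
  destruct (Rtotal_order (g a) v) as [Ha|[Ha|Ha]]; [| now exists a; split; [lra|] |];
  (destruct (Rtotal_order (g b) v) as [Hb|[Hb|Hb]]; [| now exists b; split; [lra|] |]);
  try nra; (assert (Hlt : a < b) by (destruct (Req_dec a b); [subst; lra | lra])).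
  - destruct (IVT_interv (fun x => g x - v) a b) as [z [Hz Hgz]]; try lra.
    + intros x Hx. apply continuity_pt_minus; [now apply Hc | now apply continuity_pt_const].
    + exists z; split; [lra | lra].
  - destruct (IVT_interv (fun x => v - g x) a b) as [z [Hz Hgz]]; try lra.
    + intros x Hx. apply continuity_pt_minus; [now apply continuity_pt_const | now apply Hc].
    + exists z; split; [lra | lra].
Qed.

Section Trapezoid.

Variable k : Z.
Hypothesis Hk : (2 <= k)%Z.

Definition trap_defect (g : R -> R) : R :=
  sumZ 1 (k - 1) (fun i => g (IZR i / IZR k)) - (IZR k - 1) / 2 * (g 0 + g 1).

Lemma trap_defect_minus f g : trap_defect (fun t => f t - g t) = trap_defect f - trap_defect g.
Proof. unfold trap_defect. rewrite sumZ_minus. ring. Qed.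

Lemma trap_defect_opp g : trap_defect (fun t => - g t) = - trap_defect g.
Proof.
  unfold trap_defect.
  rewrite (sumZ_ext _ _ _ (fun i => -1 * g (IZR i / IZR k))), sumZ_scal_l by (intros; ring).
  ring.
Qed.

Lemma trap_defect_quadratic A B C :
  trap_defect (fun t => A * t ^ 2 + B * t + C) = - (IZR k ^ 2 - 1) / (6 * IZR k) * A.
Proof.
  assert (Hk0 : 0 < IZR k) by (apply IZR_lt; lia).
  unfold trap_defect.
  rewrite (sumZ_ext _ _ _ (fun i => A / IZR k ^ 2 * IZR i ^ 2 + B / IZR k * IZR i + C))
    by (intros; field; lra).
  rewrite sumZ_quadratic, minus_IZR by lia. simpl. field. lra.
Qed.

Lemma trap_defect_neg F : F 0 = 0 -> F 1 = 0 -> (forall t, 0 < t < 1 -> F t < 0) ->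
  trap_defect F < 0.
Proof.
  intros F0 F1 Hneg. unfold trap_defect. rewrite F0, F1, Rplus_0_r, Rmult_0_r, Rminus_0_r.
  apply sumZ_neg; [lia|]. intros i Hi. apply Hneg.
  assert (1 <= IZR i <= IZR k - 1).
  { rewrite <- minus_IZR. split; apply IZR_le; lia. }
  assert (0 < IZR k) by lra.
  split; [apply Rdiv_lt_0_compat | apply Rlt_div_l]; lra.
Qed.

(* Subtracting the parabola through [g 0] and [g 1] with second derivative [v] leaves a
   strictly convex function vanishing at [0] and [1]. *)
Lemma trap_defect_lt g g1 g2 v :
  (forall t, 0 <= t <= 1 -> is_derive g t (g1 t)) ->
  (forall t, 0 <= t <= 1 -> is_derive g1 t (g2 t)) ->
  (forall t, 0 <= t <= 1 -> v < g2 t) ->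
  trap_defect g < - (IZR k ^ 2 - 1) / (12 * IZR k) * v.
Proof.
  intros Hg Hg1 Hv.
  set (q := fun t => v / 2 * t ^ 2 + (g 1 - g 0 - v / 2) * t + g 0).
  assert (Hdq : forall t, is_derive q t (v * t + (g 1 - g 0 - v / 2))).
  { intros t. unfold q. auto_derive; [easy | simpl; field]. }
  assert (Hd2q : forall t, is_derive (fun t => v * t + (g 1 - g 0 - v / 2)) t v).
  { intros t. auto_derive; [easy | ring]. }
  assert (HF : trap_defect (fun t => g t - q t) < 0).
  { apply trap_defect_neg; [unfold q; ring | unfold q; ring |].
    apply (convex_neg_between_roots _ (fun t => g1 t - (v * t + (g 1 - g 0 - v / 2)))
                                      (fun t => g2 t - v)).
    - intros t Ht. apply (is_derive_minus g q); auto.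
    - intros t Ht. apply (is_derive_minus g1 (fun t => v * t + _)); auto.
    - intros t Ht. specialize (Hv t Ht). lra.
    - unfold q; ring.
    - unfold q; ring. }
  assert (0 < IZR k) by (apply IZR_lt; lia).
  rewrite trap_defect_minus in HF. unfold q in HF. rewrite trap_defect_quadratic in HF.
  replace (- (IZR k ^ 2 - 1) / (12 * IZR k) * v)
    with (- (IZR k ^ 2 - 1) / (6 * IZR k) * (v / 2)) by (field; lra).
  lra.
Qed.

Lemma trapezoid_error g g1 g2 :
  (forall t, 0 <= t <= 1 -> is_derive g t (g1 t)) ->
  (forall t, 0 <= t <= 1 -> is_derive g1 t (g2 t)) ->
  (forall t, 0 <= t <= 1 -> continuity_pt g2 t) ->
  exists eta, 0 <= eta <= 1 /\ trap_defect g = - (IZR k ^ 2 - 1) / (12 * IZR k) * g2 eta.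
Proof.
  intros Hg Hg1 Hc.
  assert (Kk : 2 <= IZR k) by (apply IZR_le; lia).
  set (c := - (IZR k ^ 2 - 1) / (12 * IZR k)).
  assert (Hc0 : c < 0) by (unfold c; apply Rdiv_neg_pos; nra).
  set (v := trap_defect g / c).
  assert (Hv : trap_defect g = c * v) by (unfold v; field; lra).
  assert (Hbelow : exists t1, 0 <= t1 <= 1 /\ g2 t1 <= v).
  { apply NNPP; intros Hno.
    assert (trap_defect g < c * v).
    { apply (trap_defect_lt g g1 g2); auto.
      intros t Ht. apply Rnot_le_lt. intros Hle. apply Hno. now exists t. }
    lra. }
  assert (Habove : exists t2, 0 <= t2 <= 1 /\ v <= g2 t2).
  { apply NNPP; intros Hno.
    assert (Hopp : trap_defect (fun t => - g t) < c * - v).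
    { apply (trap_defect_lt _ (fun t => - g1 t) (fun t => - g2 t)).
      - intros t Ht. apply (is_derive_opp g). auto.
      - intros t Ht. apply (is_derive_opp g1). auto.
      - intros t Ht. apply Ropp_lt_contravar, Rnot_le_lt. intros Hle. apply Hno. now exists t. }
    rewrite trap_defect_opp in Hopp. lra. }
  destruct Hbelow as [t1 [Ht1 Hv1]], Habove as [t2 [Ht2 Hv2]].
  assert (Hivt : forall a b, 0 <= a <= b -> b <= 1 -> (g2 a - v) * (g2 b - v) <= 0 ->
            exists z, 0 <= z <= 1 /\ g2 z = v).
  { intros a b Hab Hb Hsign. destruct (ivt_closed g2 a b v) as [z [Hz Hgz]]; try lra.
    - intros x Hx. apply Hc. lra.
    - exists z. split; [lra | easy]. }
  assert (Hz : exists z, 0 <= z <= 1 /\ g2 z = v).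
  { destruct (Rle_dec t1 t2); [apply (Hivt t1 t2) | apply (Hivt t2 t1)]; nra. }
  destruct Hz as [z [Hz Hgz]]. exists z. split; [easy|]. now rewrite Hgz.
Qed.

End Trapezoid.

(** * Energies of a piecewise affine chain *)

Lemma C4_pos_derive2 f x : C4_pos f -> 0 < x ->
  is_derive f x (Derive_n f 1 x) /\
  is_derive (Derive_n f 1) x (Derive_n f 2 x) /\
  continuity_pt (Derive_n f 2) x.
Proof.
  intros Hf Hx. destruct (Hf x Hx) as [Hn _].
  split; [|split].
  - apply (Derive_correct f), (Hn 1%nat); lia.
  - apply (Derive_correct (Derive_n f 1)), (Hn 2%nat); lia.
  - apply continuity_pt_filterlim, (ex_derive_continuous (Derive_n f 2)), (Hn 3%nat); lia.
Qed.

Lemma phi_eps_derive2 f eps x : C4_pos f -> 0 < eps -> 0 < eps * x ->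
  Derive_n (phi_eps eps f) 2 x = eps * Derive_n f 2 (eps * x).
Proof.
  intros Hf Heps Hx. unfold phi_eps.
  rewrite (Derive_n_scal_l (fun r => f (eps * r))), Derive_n_comp_scal.
  - simpl. field. lra.
  - exists (mkposreal _ Hx). intros z Hz. simpl in Hz.
    change (Rabs (z - eps * x) < eps * x) in Hz. apply Rabs_lt_between' in Hz.
    intros n Hn. apply (proj1 (Hf z ltac:(lra))). lia.
Qed.

(* The [k]-bonds straddling a node between elements of spacings [a] and [b]. *)
Definition interface_energy (f : R -> R) (k : Z) (a b : R) : R :=
  sumZ 1 (k - 1) (fun i => f (IZR k * a + IZR i * (b - a))).

Definition interface_defect (f : R -> R) (k : Z) (a b : R) : R :=
  interface_energy f k a b - (IZR k - 1) / 2 * (f (IZR k * a) + f (IZR k * b)).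

Lemma interface_defect_mean_value f k a b : C4_pos f -> (2 <= k)%Z -> 0 < a -> 0 < b ->
  exists e, 0 <= e <= 1 /\
  interface_defect f k a b
  = (- IZR k ^ 3 + IZR k) / 12 * (b - a) ^ 2 * Derive_n f 2 (IZR k * (e * a + (1 - e) * b)).
Proof.
  intros Hf Hk Ha Hb.
  assert (Kk : 2 <= IZR k) by (apply IZR_le; lia).
  set (x := fun t => IZR k * a + t * (IZR k * (b - a))).
  assert (Hx : forall t, 0 <= t <= 1 -> 0 < x t).
  { intros t Ht. unfold x.
    replace (IZR k * a + t * (IZR k * (b - a))) with (IZR k * ((1 - t) * a + t * b)) by ring.
    apply Rmult_lt_0_compat; nra. }
  assert (Hdx : forall t, is_derive x t (IZR k * (b - a))) by (intros; unfold x; auto_derive; [easy|ring]).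
  destruct (trapezoid_error k Hk (fun t => f (x t))
              (fun t => IZR k * (b - a) * Derive_n f 1 (x t))
              (fun t => IZR k * (b - a) * (IZR k * (b - a) * Derive_n f 2 (x t))))
    as [eta [Heta Heq]].
  - intros t Ht. destruct (C4_pos_derive2 f (x t) Hf (Hx t Ht)) as [D1 _].
    exact (is_derive_comp f x t _ _ D1 (Hdx t)).
  - intros t Ht. destruct (C4_pos_derive2 f (x t) Hf (Hx t Ht)) as [_ [D2 _]].
    apply (is_derive_scal (fun t => Derive_n f 1 (x t))).
    exact (is_derive_comp (Derive_n f 1) x t _ _ D2 (Hdx t)).
  - intros t Ht. destruct (C4_pos_derive2 f (x t) Hf (Hx t Ht)) as [_ [_ C2]].
    apply continuity_pt_mult; [apply continuity_pt_const; now intros ? ?|].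
    apply continuity_pt_mult; [apply continuity_pt_const; now intros ? ?|].
    apply (continuity_pt_comp x (Derive_n f 2)); auto.
    apply derivable_continuous_pt. exists (IZR k * (b - a)). apply is_derive_Reals, Hdx.
  - exists (1 - eta). split; [lra|].
    replace (IZR k * ((1 - eta) * a + (1 - (1 - eta)) * b)) with (x eta) by (unfold x; ring).
    unfold interface_defect, interface_energy.
    rewrite (sumZ_ext _ _ _ (fun i => f (x (IZR i / IZR k)))) by (intros; unfold x; f_equal; field; lra).
    replace (f (IZR k * a)) with (f (x 0)) by (unfold x; f_equal; ring).
    replace (f (IZR k * b)) with (f (x 1)) by (unfold x; f_equal; ring).
    unfold trap_defect in Heq. rewrite Heq. field. lra.
Qed.

Lemma interface_defect_rescaled f eps k a b H :
  C4_pos f -> 0 < eps -> (2 <= k)%Z -> 0 < a -> 0 < b -> H <> 0 ->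
  exists e, 0 <= e <= 1 /\
  interface_defect f k a b =
  H * ((- IZR k ^ 3 + IZR k) / 12 *
       Derive_n (phi_eps eps f) 2 (IZR k * (e * (a / eps) + (1 - e) * (b / eps))))
  * (eps * H * ((b / eps - a / eps) / H) ^ 2).
Proof.
  intros Hf Heps Hk Ha Hb HH.
  destruct (interface_defect_mean_value f k a b Hf Hk Ha Hb) as [e [He Heq]].
  exists e. split; [easy|].
  assert (Hk0 : 0 < IZR k) by (apply IZR_lt; lia).
  assert (Hscale : eps * (IZR k * (e * (a / eps) + (1 - e) * (b / eps)))
                   = IZR k * (e * a + (1 - e) * b)) by (field; lra).
  rewrite Heq, phi_eps_derive2, Hscale; auto.
  - field. lra.
  - rewrite Hscale. apply Rmult_lt_0_compat; nra.
Qed.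

(* What is left of the per-element energy difference after the trapezoid defects; it
   telescopes over the elements by periodicity. *)
Definition edge_energy (f : R -> R) (s : Z) (a : R) : R :=
  sumZ 1 s (fun k => (IZR k - 1) / 2 * f (IZR k * a)).

Lemma element_energy_difference f s nu a b : (1 <= s)%Z ->
  sumZ 1 s (fun k => IZR (nu - k + 1) * f (IZR k * a) + interface_energy f k a b)
  - sumZ 1 s (fun k => IZR nu * f (IZR k * a))
  = sumZ 2 s (fun k => interface_defect f k a b) + (edge_energy f s b - edge_energy f s a).
Proof.
  intros Hs. unfold edge_energy. rewrite <- !sumZ_minus.
  rewrite (sumZ_ext _ _ _ (fun k => interface_defect f k a b
            + ((IZR k - 1) / 2 * f (IZR k * b) - (IZR k - 1) / 2 * f (IZR k * a)))).
  2:{ intros k Hk. unfold interface_defect. rewrite plus_IZR, minus_IZR. simpl. field. }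
  rewrite sumZ_plus, (sumZ_first 1 s) by lia.
  unfold interface_defect at 1, interface_energy. rewrite sumZ_empty by lia. simpl. field.
Qed.

Lemma Z_succ_invariant_const (h : Z -> R) : (forall l, h (l + 1)%Z = h l) -> forall a b, h a = h b.
Proof.
  intros Hh. assert (H0 : forall n, h n = h 0%Z).
  { intros n. induction n as [|n IH|n IH] using Z.peano_ind; [easy| |].
    - now rewrite <- Z.add_1_r, Hh.
    - rewrite <- IH, <- (Hh (Z.pred n)). f_equal. lia. }
  intros a b. now rewrite (H0 a), (H0 b).
Qed.

Lemma shift_periodic_diff (y : Z -> R) P :
  (forall l, y (l + 1 + P)%Z - y (l + P)%Z = y (l + 1)%Z - y l) ->
  forall a b, y (b + P)%Z - y (a + P)%Z = y b - y a.
Proof.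
  intros Hy a b.
  assert (Hc := Z_succ_invariant_const (fun l => y (l + P)%Z - y l)).
  specialize (Hc ltac:(intros l; simpl; specialize (Hy l); lra) a b). simpl in Hc. lra.
Qed.

Definition bond_len (y : Z -> R) (ell : Z -> Z) (j : Z) : R :=
  (y (ell j) - y (ell (j - 1)%Z)) / IZR (ell j - ell (j - 1))%Z.

Lemma bond_len_periodic (y : Z -> R) (ell : Z -> Z) M N :
  (forall l, y (l + 1 + 2 * N)%Z - y (l + 2 * N)%Z = y (l + 1)%Z - y l) ->
  (forall j, ell (j + 2 * M)%Z = (ell j + 2 * N)%Z) -> ell (- M)%Z = (- N)%Z -> ell M = N ->
  bond_len y ell (M + 1) = bond_len y ell (- M + 1).
Proof.
  intros Hy Hl Hlm HlM. unfold bond_len.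
  replace (M + 1 - 1)%Z with M by lia. replace (- M + 1 - 1)%Z with (- M)%Z by lia.
  replace (M + 1)%Z with (- M + 1 + 2 * M)%Z by lia.
  rewrite Hl, HlM, Hlm. replace (y N) with (y (- N + 2 * N)%Z) by (f_equal; lia).
  rewrite (shift_periodic_diff y (2 * N) Hy). f_equal. f_equal. lia.
Qed.

Lemma Z2_choice (P : Z -> Z -> R -> Prop) (Q : Z -> Prop) :
  (forall j k, Q k -> exists e, P j k e) -> exists eta, forall j k, Q k -> P j k (eta j k).
Proof.
  intros HP.
  assert (Hex : forall jk : Z * Z, exists e, Q (snd jk) -> P (fst jk) (snd jk) e).
  { intros [j k]. destruct (classic (Q k)) as [Hq|Hq].
    - destruct (HP j k Hq) as [e He]. now exists e.
    - exists 0. now intros. }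
  destruct (functional_choice _ Hex) as [eta Heta].
  exists (fun j k => eta (j, k)). intros j k. exact (Heta (j, k)).
Qed.

Section Chain.

Variables (s : Z) (y : Z -> R) (ell : Z -> Z).
Hypothesis Hs : (1 <= s)%Z.
Hypothesis Hnu : forall j, (s <= ell j - ell (j - 1))%Z.
Hypothesis Hlin : forall j i, (0 <= i <= ell j - ell (j - 1))%Z ->
  y (ell (j - 1) + i)%Z = y (ell (j - 1)%Z) + IZR i * bond_len y ell j.

Lemma ell_incr j : (ell (j - 1) < ell j)%Z.
Proof. specialize (Hnu j). lia. Qed.

Lemma bond_len_pos : (forall l, y l < y (l + 1)%Z) -> forall j, 0 < bond_len y ell j.
Proof.
  intros Hy j. specialize (Hnu j). assert (H1 := Hlin j 1 ltac:(lia)).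
  specialize (Hy (ell (j - 1)%Z)). lra.
Qed.

Lemma Hn_pos eps j : 0 < eps -> 0 < Hn eps ell j.
Proof.
  intros Heps. unfold Hn, Xn. assert (H1 := ell_incr j). assert (H2 := ell_incr (j - 1)).
  replace (j - 1 - 1)%Z with (j - 2)%Z in H2 by lia.
  assert (IZR (ell (j - 2)%Z) < IZR (ell j)) by (apply IZR_lt; lia). nra.
Qed.

Lemma Y1_bond_len eps j : 0 < eps -> Y1 eps y ell j = bond_len y ell j / eps.
Proof.
  intros Heps. assert (Hnu0 : 0 < IZR (ell j - ell (j - 1))) by (apply IZR_lt, Z.lt_0_sub, ell_incr).
  unfold Y1, Yn, Xn, bond_len.
  replace (eps * IZR (ell j) - eps * IZR (ell (j - 1)%Z)) with (eps * IZR (ell j - ell (j - 1)))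
    by (rewrite minus_IZR; ring).
  field. lra.
Qed.

Lemma y_on_element j m : (ell (j - 1) <= m <= ell j)%Z ->
  y m = y (ell (j - 1)%Z) + IZR (m - ell (j - 1)) * bond_len y ell j.
Proof.
  intros Hm. rewrite <- Hlin by lia. f_equal. lia.
Qed.

Lemma bond_in_element j m k : (ell (j - 1) <= m)%Z -> (0 <= k)%Z -> (m + k <= ell j)%Z ->
  y (m + k)%Z - y m = IZR k * bond_len y ell j.
Proof.
  intros Hm Hk Hmk. rewrite (y_on_element j (m + k)), (y_on_element j m) by lia.
  replace (m + k - ell (j - 1))%Z with (m - ell (j - 1) + k)%Z by lia. rewrite plus_IZR. ring.
Qed.

Lemma bond_across_node j i k : (0 <= i <= k)%Z -> (k <= s)%Z ->
  y (ell j + i)%Z - y (ell j + i - k)%Z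
  = IZR k * bond_len y ell j + IZR i * (bond_len y ell (j + 1) - bond_len y ell j).
Proof.
  intros Hi Hk. assert (Hj := Hnu j). assert (Hj1 := Hnu (j + 1)%Z).
  replace (j + 1 - 1)%Z with j in Hj1 by lia.
  assert (Hnext := y_on_element (j + 1) (ell j + i)).
  replace (j + 1 - 1)%Z with j in Hnext by lia.
  rewrite Hnext, (y_on_element j (ell j + i - k)), (y_on_element j (ell j)) by lia.
  replace (ell j + i - ell j)%Z with i by lia.
  replace (ell j + i - k - ell (j - 1))%Z with (ell j - ell (j - 1) + i - k)%Z by lia.
  rewrite !minus_IZR, plus_IZR, minus_IZR. ring.
Qed.

Lemma element_bond_energy f j k : (1 <= k <= s)%Z ->
  sumZ 0 (ell j - ell (j - 1)%Z - 1)
    (fun i => f (y (ell (j - 1) + i + k)%Z - y (ell (j - 1) + i)%Z))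
  = IZR (ell j - ell (j - 1) - k + 1) * f (IZR k * bond_len y ell j)
    + interface_energy f k (bond_len y ell j) (bond_len y ell (j + 1)).
Proof.
  intros Hk. assert (Hj := Hnu j).
  rewrite (sumZ_split 0 (ell j - ell (j - 1) - k)%Z) by lia. f_equal.
  - rewrite (sumZ_ext _ _ _ (fun _ => f (IZR k * bond_len y ell j))), sumZ_const.
    + f_equal. f_equal. lia.
    + lia.
    + intros i Hi. f_equal. apply bond_in_element; lia.
  - unfold interface_energy.
    replace (ell j - ell (j - 1) - k + 1)%Z with (1 + (ell j - ell (j - 1) - k))%Z by lia.
    replace (ell j - ell (j - 1) - 1)%Z with (k - 1 + (ell j - ell (j - 1) - k))%Z by lia.
    rewrite <- sumZ_shift. apply sumZ_ext. intros i Hi. f_equal.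
    rewrite <- (bond_across_node j i k) by lia. f_equal; f_equal; lia.
Qed.

Lemma E_atom_by_elements f M N : (0 <= M)%Z -> ell (- M)%Z = (- N)%Z -> ell M = N ->
  E_atom s N f y
  = sumZ (- M + 1) M (fun j => sumZ 1 s (fun k =>
      IZR (ell j - ell (j - 1) - k + 1) * f (IZR k * bond_len y ell j)
      + interface_energy f k (bond_len y ell j) (bond_len y ell (j + 1)))).
Proof.
  intros HM Hlm HlM. unfold E_atom. rewrite (sumZ_swap (- M + 1) M). apply sumZ_ext. intros k Hk.
  rewrite (sumZ_ext _ _ _ (fun l => (fun m => f (y (m + k)%Z - y m)) (l + -1)%Z))
    by (intros; f_equal; f_equal; f_equal; lia).
  rewrite (sumZ_shift _ _ (-1) (fun m => f (y (m + k)%Z - y m))).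
  replace (- N + 1 + -1)%Z with (ell (- M)%Z) by lia.
  replace (N + -1)%Z with (ell M - 1)%Z by lia.
  rewrite (sumZ_blocks ell _ (- M) M ell_incr) by lia.
  apply sumZ_ext. intros j Hj. rewrite <- element_bond_energy by lia.
  apply sumZ_ext. intros i Hi. f_equal.
Qed.

Lemma E_qc_by_elements f M eps : 0 < eps ->
  E_qc s M eps f y ell
  = sumZ (- M + 1) M (fun j => sumZ 1 s (fun k =>
      IZR (ell j - ell (j - 1)) * f (IZR k * bond_len y ell j))).
Proof.
  intros Heps. unfold E_qc. apply sumZ_ext. intros j Hj.
  unfold nun, phi_cb, phi_eps. rewrite <- sumZ_scal_l. apply sumZ_ext. intros k Hk.
  rewrite Y1_bond_len by easy.
  replace (eps * (IZR k * (bond_len y ell j / eps))) with (IZR k * bond_len y ell j) by (field; lra).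
  field. lra.
Qed.

Lemma E_atom_eq_E_qc_plus_defects f M N eps :
  (0 <= M)%Z -> 0 < eps -> ell (- M)%Z = (- N)%Z -> ell M = N ->
  bond_len y ell (M + 1) = bond_len y ell (- M + 1) ->
  E_atom s N f y
  = E_qc s M eps f y ell
    + sumZ (- M + 1) M (fun j => sumZ 2 s (fun k =>
        interface_defect f k (bond_len y ell j) (bond_len y ell (j + 1)))).
Proof.
  intros HM Heps Hlm HlM Hper.
  rewrite <- (Rplus_minus (E_qc s M eps f y ell) (E_atom s N f y)). f_equal.
  rewrite (E_atom_by_elements f M N), (E_qc_by_elements f M eps), <- sumZ_minus by easy.
  rewrite (sumZ_ext _ _ _ (fun j => sumZ 2 s (fun k =>
             interface_defect f k (bond_len y ell j) (bond_len y ell (j + 1)))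
           + (edge_energy f s (bond_len y ell (j + 1)) - edge_energy f s (bond_len y ell j))))
    by (intros; apply element_energy_difference, Hs).
  rewrite sumZ_plus, (sumZ_telescope _ _ (fun j => edge_energy f s (bond_len y ell j))), Hper
    by lia.
  ring.
Qed.

Lemma interface_defect_weight f eps j k :
  C4_pos f -> 0 < eps -> (forall l, y l < y (l + 1)%Z) -> (2 <= k)%Z ->
  exists e, 0 <= e <= 1 /\
    interface_defect f k (bond_len y ell j) (bond_len y ell (j + 1))
    = Hn eps ell (j + 1) *
      ((- IZR k ^ 3 + IZR k) / 12 *
       Derive_n (phi_eps eps f) 2 (IZR k * (e * Y1 eps y ell j + (1 - e) * Y1 eps y ell (j + 1)%Z)))
      * (eps * Hn eps ell (j + 1) * Y2 eps y ell (j + 1) ^ 2).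
Proof.
  intros Hf Heps Hy Hk.
  assert (HH : Hn eps ell (j + 1) <> 0) by (apply Rgt_not_eq, Hn_pos, Heps).
  destruct (interface_defect_rescaled f eps k _ _ _ Hf Heps Hk
              (bond_len_pos Hy j) (bond_len_pos Hy (j + 1)) HH) as [e [He Heq]].
  exists e. split; [easy|].
  unfold Y2. rewrite Heq, !Y1_bond_len, Z.add_simpl_r by easy. reflexivity.
Qed.

End Chain.


Theorem proposition2p1
  (s M N : Z) (phit : R -> R) (rstar : R) (y : Z -> R) (ell : Z -> Z) (eps : R)
  (Hs : (1 <= s)%Z) (HM : (1 <= M)%Z) (HMN : (M < N)%Z)
  (Hreg : C4_pos phit)
  (Hrstar : 0 < rstar)
  (Hconv : forall r, 0 < r -> r <= rstar -> 0 <= Derive_n phit 2 r)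
  (Hconc : forall r, rstar < r -> Derive_n phit 2 r < 0)
  (Hdecay : decays_at_infty phit)
  (Hincr : forall l : Z, y l < y (l + 1)%Z)
  (Hper : forall l : Z, y (l + 1 + 2 * N)%Z - y (l + 2 * N)%Z = y (l + 1)%Z - y l)
  (Hlm : ell (- M)%Z = (- N)%Z) (HlM : ell M = N)
  (Hlinc : forall j : Z, (- M <= j < M)%Z -> (ell j < ell (j + 1))%Z)
  (Hlper : forall j : Z, ell (j + 2 * M)%Z = (ell j + 2 * N)%Z)
  (Hnu : forall j : Z, (s <= ell j - ell (j - 1)%Z)%Z)
  (Hlin : forall j i : Z, (0 <= i <= ell j - ell (j - 1)%Z)%Z ->
     y (ell (j - 1)%Z + i)%Z
     = y (ell (j - 1)%Z) + IZR i * ((y (ell j) - y (ell (j - 1)%Z)) / IZR (ell j - ell (j - 1)%Z)%Z))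
  (Heps : 0 < eps) :
  exists eta : Z -> Z -> R,
    (forall j k : Z, (- M + 1 <= j <= M)%Z -> (2 <= k <= s)%Z ->
       0 <= eta j k <= 1) /\
    E_atom s N phit y =
      E_qc s M eps phit y ell +
      sumZ (- M + 1) M (fun j =>
        Hn eps ell (j + 1)%Z *
        sumZ 2 s (fun k =>
          (- (IZR k) ^ 3 + IZR k) / 12 *
          Derive_n (phi_eps eps phit) 2
            (IZR k * (eta j k * Y1 eps y ell j + (1 - eta j k) * Y1 eps y ell (j + 1)%Z)))
        * (eps * Hn eps ell (j + 1)%Z * (Y2 eps y ell (j + 1)%Z) ^ 2)).
Proof.
  destruct (Z2_choice _ _ (fun j k => interface_defect_weight s y ell Hs Hnu Hlin phit eps j k
                                   Hreg Heps Hincr)) as [eta Heta].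
  exists eta. split; [intros j k _ Hk; apply Heta; lia|].
  rewrite (E_atom_eq_E_qc_plus_defects s y ell Hs Hnu Hlin phit M N eps ltac:(lia) Heps Hlm HlM
             (bond_len_periodic y ell M N Hper Hlper Hlm HlM)).
  f_equal. apply sumZ_ext. intros j Hj.
  rewrite <- sumZ_scal_l, <- sumZ_scal_r. apply sumZ_ext. intros k Hk.
  apply Heta. lia.
Qed.
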